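(* Let $A$ be a $d$-dimensional polystochastic matrix of order $n$, $1\le k\le d-1$, and let $\Gamma$ be a $k$-dimensional plane of $A$ containing an index $\alpha$ with $0<a_\alpha<1$. Then there exist a $k$-dimensional plane $\Gamma'$ parallel to and diagonally located with respect to $\Gamma$, and an index $\alpha'\in\Gamma'$, with $0<a_{\alpha'}<1$.
   Context: $A=(a_\alpha)_{\alpha\in\{0,\dots,n-1\}^d}$ is polystochastic if nonnegative and every line (set of indices obtained by fixing all coordinates but one) sums to $1$. A $k$-dimensional plane of direction $(i_1,\dots,i_{d-k})$ is obtained by fixing coordinates $i_1,\dots,i_{d-k}$ to values $(\beta_1,\dots,\beta_{d-k})$ and letting the other coordinates vary. Two planes are parallel if they have the same direction, and parallel planes with fixed values $(\beta_j)$, $(\gamma_j)$ are diagonally located if $\beta_j\ne\gamma_j$ for every $j$. *)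

From mathcomp Require Import all_boot all_order all_algebra.
Set Implicit Arguments. Unset Strict Implicit. Unset Printing Implicit Defensive.
Import Order.TTheory GRing.Theory Num.Theory.
Local Open Scope ring_scope.

Definition mindex (d n : nat) := {ffun 'I_d -> 'I_n}.

Definition setcoord (d n : nat) (alpha : mindex d n) (i : 'I_d) (t : 'I_n)
  : mindex d n := [ffun j => if j == i then t else alpha j].

Definition polystochastic (R : numDomainType) (d n : nat)
  (A : {ffun mindex d n -> R}) : Prop :=
  (forall alpha, 0 <= A alpha) /\
  (forall (i : 'I_d) (alpha : mindex d n),
      \sum_(t < n) A (setcoord alpha i t) = 1).

(* A k-dimensional plane is given by its direction S (the set of d-k fixed
   coordinates) and the fixed values beta (only beta restricted to S
   matters). *)
Definition in_plane (d n : nat) (S : {set 'I_d}) (beta : mindex d n)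
  (alpha : mindex d n) : Prop :=
  forall i, i \in S -> alpha i = beta i.

Definition diag_located (d n : nat) (S : {set 'I_d}) (beta gamma : mindex d n)
  : Prop :=
  forall i, i \in S -> beta i <> gamma i.

From mathcomp Require Import all_boot all_order all_algebra.
Import Order.TTheory GRing.Theory Num.Theory.
Local Open Scope ring_scope.

(* Every line through a fractional entry contains a second fractional entry,
   since the line sums to 1 with nonnegative terms. Moving to that partner
   changes one coordinate, so starting from the given entry in Gamma and
   changing, one by one, every fixed coordinate of Gamma yields a fractional
   entry all of whose fixed coordinates differ from those of Gamma; the plane
   through it with the same direction is the required Gamma'. *)

Lemma fractional_partner (R : numDomainType) (T : finType) (f : T -> R) (x : T) :
  (forall t, 0 <= f t) -> \sum_t f t = 1 -> 0 < f x < 1 ->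
  exists2 y, y != x & 0 < f y < 1.
Proof.
move=> f_ge0 sum1 /andP[fx_gt0 fx_lt1].
have sum_rest : \sum_(t | t != x) f t = 1 - f x.
  by rewrite -sum1 [\sum_t _](bigD1 x) //= addrC addrK.
have [y /andP[yx fy_gt0] | all0] := pickP [pred y | (y != x) && (0 < f y)]; last first.
  have : \sum_(t | t != x) f t = 0.
    apply: big1 => t tx; have := f_ge0 t; rewrite le_eqVlt.
    by move: (all0 t); rewrite /= tx /= => ->; rewrite orbF eq_sym => /eqP.
  by rewrite sum_rest => /eqP; rewrite subr_eq0 => /eqP fx1; rewrite -fx1 ltxx in fx_lt1.
exists y => //; rewrite fy_gt0 /=.
have : f y <= 1 - f x.
  by rewrite -sum_rest (bigD1 y) //= lerDl sumr_ge0.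
by move/le_lt_trans; apply; rewrite gtrBl.
Qed.

Lemma setcoord_id (d n : nat) (x : mindex d n) (i : 'I_d) : setcoord x i (x i) = x.
Proof. by apply/ffunP=> j; rewrite ffunE; case: eqP => // ->. Qed.

Lemma setcoord_same (d n : nat) (x : mindex d n) (i : 'I_d) (t : 'I_n) :
  setcoord x i t i = t.
Proof. by rewrite ffunE eqxx. Qed.

Lemma setcoord_other (d n : nat) (x : mindex d n) (i j : 'I_d) (t : 'I_n) :
  j != i -> setcoord x i t j = x j.
Proof. by rewrite ffunE => /negbTE ->. Qed.

Section Polystochastic.

Variables (R : numDomainType) (d n : nat) (A : {ffun mindex d n -> R}).
Hypothesis A_ps : polystochastic A.

Lemma polystochastic_line_partner (x : mindex d n) (i : 'I_d) :
  0 < A x < 1 -> exists2 t, t != x i & 0 < A (setcoord x i t) < 1.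
Proof.
case: A_ps => A_ge0 line_sum1 Ax.
apply: (@fractional_partner _ _ (fun t => A (setcoord x i t)) (x i)) => //.
by rewrite setcoord_id.
Qed.

Lemma polystochastic_shift (alpha : mindex d n) (s : seq 'I_d) :
  0 < A alpha < 1 ->
  exists2 alpha' : mindex d n, 0 < A alpha' < 1 &
    forall i, (alpha' i != alpha i) = (i \in s).
Proof.
move=> A_alpha; elim: s => [|i s [a' Aa' a'_diff]].
  by exists alpha => // i; rewrite eqxx.
have [i_s | i_notin_s] := boolP (i \in s).
  by exists a' => // j; rewrite in_cons a'_diff; case: eqP => // ->.
have a'_i : a' i = alpha i by apply/eqP; rewrite -[_ == _]negbK a'_diff.
have [t t_new Aa't] := @polystochastic_line_partner a' i Aa'.
exists (setcoord a' i t) => // j; rewrite in_cons.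
have [->|ji] := eqVneq j i; first by rewrite setcoord_same -a'_i.
by rewrite setcoord_other.
Qed.

End Polystochastic.

Theorem mainTheorem7 (R : realFieldType) (d n k : nat)
  (A : {ffun mindex d n -> R}) (S : {set 'I_d}) (beta : mindex d n)
  (alpha : mindex d n) :
  polystochastic A ->
  (1 <= k)%N -> (k <= d - 1)%N ->
  #|S| = (d - k)%N ->
  in_plane S beta alpha -> 0 < A alpha < 1 ->
  exists (gamma alpha' : mindex d n),
    diag_located S beta gamma /\ in_plane S gamma alpha' /\
    0 < A alpha' < 1.
Proof.
move=> A_ps _ _ _ alpha_in A_alpha.
have [alpha' A_alpha' alpha'_diff] :=
  @polystochastic_shift R d n A A_ps alpha (enum S) A_alpha.
exists alpha', alpha'; split=> // i iS.
rewrite -(alpha_in i iS); apply/eqP.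
by rewrite eq_sym alpha'_diff mem_enum.
Qed.
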